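(* Let $f$ be an orientation-preserving $C^1$ diffeomorphism of the circle $\mathrm{S}^1=\mathbb{R}/\mathbb{Z}$ with irrational rotation number $\rho$. Then there is a sequence $(h_n)$ of orientation-preserving $C^1$ circle diffeomorphisms such that $h_n f h_n^{-1}$ converges to the rotation $R_\rho: x\mapsto x+\rho$ in the $C^1$ topology. *)

From Stdlib Require Import Reals Lra ZArith.
Open Scope R_scope.

(* An orientation-preserving C^1 diffeomorphism of S^1 = R/Z, represented by a
   lift F : R -> R: F is C^1 with everywhere positive derivative and
   F (x + 1) = F x + 1.  (Positive derivative + periodicity of F - id give a
   bijection of R whose inverse is automatically C^1.) *)
Definition circle_diffeo (F : R -> R) : Prop :=
  exists F' : R -> R,
    (forall x, derivable_pt_lim F x (F' x)) /\
    continuity F' /\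
    (forall x, 0 < F' x) /\
    (forall x, F (x + 1) = F x + 1).

Definition rotation_number (F : R -> R) (rho : R) : Prop :=
  forall x, Un_cv (fun n => (Nat.iter n F x - x) / INR n) rho.

Definition irrational (r : R) : Prop :=
  forall p q : Z, q <> 0%Z -> r <> IZR p / IZR q.

(* Let g = ln F' and let S_n = g + g o F + ... + g o F^(n-1) be its Birkhoff sums.  The key
   fact, which replaces the unique ergodicity of F (g has mean zero for the invariant measure), is
   that S_n = o(n) uniformly.  Poincare's semiconjugacy h, with h o F = h + rho, is built from the
   cyclic order of the orbit of 0.  If S_n x <= - eps n for arbitrarily large n, a distortion
   estimate along the level sets of h and a compactness argument give a point l with
   S_j l <= - j eps/4 for all j; then F^j contracts an interval around l exponentially, whereas h
   maps its images onto arcs of a fixed positive length.  The same argument for F^-1 gives the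
   upper bound.
   Now let phi_m = (S_0 + ... + S_(m-1)) / m and let H_m be the normalised primitive of exp phi_m.
   Since phi_m o F + g - phi_m = S_m / m, the derivative of H_m F H_m^-1 is exp (S_m / m) o H_m^-1,
   which tends to 1 uniformly; a degree-one map with derivative close to 1 is close to a
   translation, and the rotation number identifies the translation as rho. *)

From Stdlib Require Import Reals ZArith.
From Stdlib Require Import Lra Lia List Classical ClassicalEpsilon.
From Coquelicot Require Coquelicot.
Open Scope R_scope.

Lemma exists_nat_gt (r : R) : exists N : nat, r < INR N.
Proof.
  destruct (INR_archimed 1 r Rlt_0_1) as [N HN]. exists N. lra.
Qed.

Lemma exists_Z_floor x : exists k : Z, 0 <= x - IZR k < 1.
Proof. exists (Int_part x). pose proof (base_Int_part x). lra. Qed.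

Lemma Int_part_nonneg r : 0 <= r -> (0 <= Int_part r)%Z.
Proof.
  intros Hr. pose proof (base_Int_part r). apply le_IZR.
  destruct (Z_lt_le_dec (Int_part r) 0) as [Hl|]; [|apply IZR_le; auto].
  apply Z.lt_le_pred, IZR_le in Hl. rewrite <- Z.sub_1_r, minus_IZR in Hl. simpl in *. lra.
Qed.

Lemma INR_Z_to_nat (z : Z) : (0 <= z)%Z -> INR (Z.to_nat z) = IZR z.
Proof. intros H. rewrite INR_IZR_INZ, Z2Nat.id; auto. Qed.

Lemma Rabs_le_inv (x y : R) : Rabs x <= y -> - y <= x <= y.
Proof.
  intros H. pose proof (Rle_abs x). pose proof (Rle_abs (- x)). rewrite Rabs_Ropp in *. lra.
Qed.

Lemma exp_le_exp x y : x <= y -> exp x <= exp y.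
Proof. intros [H| ->]; [left; apply exp_increasing; auto|lra]. Qed.

Lemma continuity_pt_eps (p : R -> R) x : continuity_pt p x ->
  forall eps, 0 < eps -> exists d, 0 < d /\ forall y, Rabs (y - x) < d -> Rabs (p y - p x) < eps.
Proof.
  intros H eps He. destruct (H eps He) as [d [Hd Hdd]]. exists d. split; auto.
  intros y Hy. destruct (Req_dec y x) as [->|ne]; [rewrite Rminus_diag, Rabs_R0; auto|].
  apply Hdd. repeat split; auto.
Qed.

Lemma continuity_pt_of_eps (p : R -> R) x :
  (forall eps, 0 < eps -> exists d, 0 < d /\ forall y, Rabs (y - x) < d -> Rabs (p y - p x) < eps) ->
  continuity_pt p x.
Proof.
  intros H eps He. destruct (H eps He) as [d [Hd Hdd]]. exists d. split; auto.
  intros y [_ Hy]. apply Hdd, Hy.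
Qed.

Lemma exists_argmax_upto (s : nat -> R) n :
  exists m, (m <= n)%nat /\ forall k, (k <= n)%nat -> s k <= s m.
Proof.
  induction n as [|n [m [Hm Hk]]].
  - exists O. split; auto. intros k Hk. replace k with O by lia. lra.
  - destruct (Rle_dec (s (S n)) (s m)).
    + exists m. split; [lia|]. intros k Hk'.
      destruct (Nat.eq_dec k (S n)) as [->|]; auto. apply Hk; lia.
    + exists (S n). split; [lia|]. intros k Hk'.
      destruct (Nat.eq_dec k (S n)) as [->|]; [lra|]. pose proof (Hk k ltac:(lia)). lra.
Qed.

Lemma Un_cv_le_along_multiples (u : nat -> R) l c (d : nat) : (1 <= d)%nat ->
  Un_cv u l -> (forall m, u (S m * d)%nat <= c) -> l <= c.
Proof.
  intros Hd Hu Hc. apply Rnot_lt_le; intro Hlt.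
  destruct (Hu (l - c) ltac:(lra)) as [N HN].
  specialize (HN (S N * d)%nat ltac:(nia)). specialize (Hc N).
  unfold Rdist in HN. apply Rabs_def2 in HN. lra.
Qed.

Lemma Un_cv_ge_along_multiples (u : nat -> R) l c (d : nat) : (1 <= d)%nat ->
  Un_cv u l -> (forall m, c <= u (S m * d)%nat) -> c <= l.
Proof.
  intros Hd Hu Hc.
  enough (- l <= - c) by lra.
  apply (Un_cv_le_along_multiples (opp_seq u) _ _ d Hd (CV_opp _ _ Hu)).
  intro m. unfold opp_seq. specialize (Hc m). lra.
Qed.

Section Equivariant.
Variables (p : R -> R) (c : R).
Hypothesis p_shift : forall x, p (x + 1) = p x + c.

Lemma shift_nat (n : nat) x : p (x + INR n) = p x + INR n * c.
Proof.
  revert x; induction n as [|n IH]; intros x.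
  - simpl. rewrite Rplus_0_r. ring.
  - rewrite S_INR, <- Rplus_assoc, p_shift, IH. ring.
Qed.

Lemma shift_Z (k : Z) x : p (x + IZR k) = p x + IZR k * c.
Proof.
  destruct k as [|q|q].
  - simpl. rewrite Rplus_0_r. ring.
  - rewrite <- positive_nat_Z, <- INR_IZR_INZ. apply shift_nat.
  - rewrite <- Pos2Z.opp_pos, opp_IZR, <- positive_nat_Z, <- INR_IZR_INZ.
    pose proof (shift_nat (Pos.to_nat q) (x + - INR (Pos.to_nat q))) as E.
    replace (x + - INR (Pos.to_nat q) + INR (Pos.to_nat q)) with x in E by ring. lra.
Qed.

Hypothesis p_cont : continuity p.

Lemma shift_uniform_continuity eps : 0 < eps ->
  exists d, 0 < d /\ forall x y, Rabs (x - y) < d -> Rabs (p x - p y) < eps.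
Proof.
  intros He.
  destruct (Heine p (fun t => -1 <= t <= 2) (compact_P3 (-1) 2) (fun x _ => p_cont x)
              (mkposreal eps He)) as [[d Hd] Hdd]. simpl in Hdd.
  exists (Rmin d 1). split; [apply Rmin_pos; lra|].
  intros x y Hxy. destruct (exists_Z_floor x) as [k Hk].
  pose proof (shift_Z k (x - IZR k)) as E1. pose proof (shift_Z k (y - IZR k)) as E2.
  replace (x - IZR k + IZR k) with x in E1 by ring.
  replace (y - IZR k + IZR k) with y in E2 by ring.
  replace (p x - p y) with (p (x - IZR k) - p (y - IZR k)) by lra.
  pose proof (Rmin_l d 1). pose proof (Rmin_r d 1). apply Rabs_def2 in Hxy.
  apply Hdd; try lra. apply Rabs_def1; lra.
Qed.

End Equivariant.

Definition periodic (p : R -> R) := forall x, p (x + 1) = p x.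

Lemma periodic_shift p : periodic p -> forall x, p (x + 1) = p x + 0.
Proof. intros H x. rewrite H. ring. Qed.

Lemma periodic_Z p : periodic p -> forall (k : Z) x, p (x + IZR k) = p x.
Proof. intros H k x. rewrite (shift_Z p 0 (periodic_shift p H)). ring. Qed.

Lemma periodic_bounded (p : R -> R) : continuity p -> periodic p ->
  exists C, 1 <= C /\ forall x, Rabs (p x) <= C.
Proof.
  intros Hc Hp.
  destruct (continuity_ab_maj p 0 1) as [M [HM _]]; [lra| intros; apply Hc|].
  destruct (continuity_ab_min p 0 1) as [m [Hm _]]; [lra| intros; apply Hc|].
  exists (Rmax 1 (Rmax (Rabs (p M)) (Rabs (p m)))). split; [apply Rmax_l|].
  intros x. destruct (exists_Z_floor x) as [k Hk].
  replace (p x) with (p (x - IZR k)) by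
    (rewrite <- (periodic_Z p Hp k (x - IZR k)); f_equal; ring).
  specialize (HM (x - IZR k) ltac:(lra)). specialize (Hm (x - IZR k) ltac:(lra)).
  pose proof (Rmax_r 1 (Rmax (Rabs (p M)) (Rabs (p m)))).
  pose proof (Rmax_l (Rabs (p M)) (Rabs (p m))). pose proof (Rmax_r (Rabs (p M)) (Rabs (p m))).
  pose proof (Rle_abs (p M)). pose proof (Rle_abs (- p m)). rewrite Rabs_Ropp in *.
  apply Rabs_le. lra.
Qed.

Lemma periodic_nonpos_or_root (phi : R -> R) z0 : continuity phi -> periodic phi -> phi z0 <= 0 ->
  (forall z, phi z <= 0) \/ exists z, phi z = 0.
Proof.
  intros Hc Hp H0. destruct (classic (forall z, phi z <= 0)) as [|Hn]; [left; auto|right].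
  apply not_all_ex_not in Hn. destruct Hn as [z1 Hz1]. apply Rnot_le_lt in Hz1.
  destruct H0 as [H0|H0]; [|exists z0; auto].
  set (z1' := z1 + IZR (up (z0 - z1))).
  assert (Hz1' : phi z1' = phi z1) by apply (periodic_Z phi Hp).
  assert (z0 < z1') by (unfold z1'; destruct (archimed (z0 - z1)); lra).
  destruct (IVT phi z0 z1' Hc H H0 ltac:(lra)) as [z [_ Hz]]. exists z; auto.
Qed.

Lemma degree_one_near_translate (p : R -> R) : (forall x y, x < y -> p x < p y) ->
  (forall x, p (x + 1) = p x + 1) -> forall x, p 0 + x - 1 < p x < p 0 + x + 1.
Proof.
  intros Hi Hp x. destruct (exists_Z_floor x) as [k Hk].
  pose proof (shift_Z p 1 Hp k 0) as E0. rewrite Rplus_0_l in E0.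
  pose proof (shift_Z p 1 Hp (k + 1) 0) as E1. rewrite Rplus_0_l, plus_IZR in E1. simpl in E1.
  split.
  - destruct (Req_dec x (IZR k)) as [->|ne]; [rewrite E0; lra|].
    assert (p (IZR k) < p x) by (apply Hi; lra). lra.
  - assert (p x < p (IZR k + 1)) by (apply Hi; lra). lra.
Qed.

Lemma Un_cv_near_linear (X : nat -> R) rho c e : Un_cv (fun j => X j / INR j) rho ->
  (forall j, Rabs (X j - INR j * c) <= INR j * e + 2) -> Rabs (rho - c) <= e.
Proof.
  intros Hcv HX. apply Rnot_lt_le; intro Hlt.
  set (gam := Rabs (rho - c) - e).
  destruct (Hcv (gam / 2) ltac:(unfold gam; lra)) as [N HN].
  destruct (exists_nat_gt (4 / gam)) as [M HM].
  set (j := (Nat.max N M + 1)%nat).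
  assert (HjM : INR M + 1 <= INR j).
  { unfold j. rewrite plus_INR. simpl. apply Rplus_le_compat_r, le_INR. lia. }
  pose proof (pos_INR M).
  specialize (HN j ltac:(unfold j; lia)). unfold Rdist in HN. specialize (HX j).
  assert (Hjg : 4 < INR j * gam).
  { apply (Rmult_lt_compat_r gam) in HM; [|unfold gam; lra].
    replace (4 / gam * gam) with 4 in HM by (field; unfold gam; lra). nra. }
  assert (Hd : Rabs (X j / INR j - c) <= e + 2 / INR j).
  { replace (X j / INR j - c) with ((X j - INR j * c) / INR j) by (field; lra).
    unfold Rdiv. rewrite Rabs_mult, Rabs_inv, (Rabs_right (INR j)) by lra.
    apply Rmult_le_reg_r with (INR j); [lra|].
    rewrite Rmult_assoc, Rinv_l by lra. field_simplify; lra. }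
  assert (2 / INR j < gam / 2).
  { apply Rmult_lt_reg_r with (INR j); [lra|]. field_simplify; lra. }
  pose proof (Rabs_triang (rho - X j / INR j) (X j / INR j - c)).
  replace (rho - X j / INR j + (X j / INR j - c)) with (rho - c) in H1 by ring.
  rewrite Rabs_minus_sym in HN. unfold gam in *. lra.
Qed.

Lemma increasing_of_deriv_pos (f f' : R -> R) : (forall x, derivable_pt_lim f x (f' x)) ->
  (forall x, 0 < f' x) -> forall x y, x < y -> f x < f y.
Proof.
  intros Hd Hp x y Hxy. destruct (MVT_cor2 f f' x y Hxy (fun c _ => Hd c)) as [c [Hc _]].
  pose proof (Hp c). nra.
Qed.

Lemma constant_of_deriv_zero (f : R -> R) : (forall x, derivable_pt_lim f x 0) -> forall x, f x = f 0.
Proof.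
  intros Hd x. destruct (Rtotal_order 0 x) as [H|[ <-|H]]; auto.
  - destruct (MVT_cor2 f (fun _ => 0) 0 x H (fun c _ => Hd c)) as [c [Hc _]]. lra.
  - destruct (MVT_cor2 f (fun _ => 0) x 0 H (fun c _ => Hd c)) as [c [Hc _]]. lra.
Qed.

Lemma derivable_pt_lim_shift1 x : derivable_pt_lim (fun y => y + 1) x 1.
Proof.
  pose proof (derivable_pt_lim_plus id (fct_cte 1) x 1 0
    (derivable_pt_lim_id x) (derivable_pt_lim_const 1 x)) as H.
  rewrite Rplus_0_r in H. exact H.
Qed.

Lemma degree_one_near_translation (G D : R -> R) e : (forall y, G (y + 1) = G y + 1) ->
  (forall y, derivable_pt_lim G y (D y)) -> (forall y, Rabs (D y - 1) <= e) ->
  forall y, Rabs (G y - y - G 0) <= e.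
Proof.
  intros Hp Hd HD y.
  assert (He : 0 <= e) by (pose proof (HD 0); pose proof (Rabs_pos (D 0 - 1)); lra).
  destruct (exists_Z_floor y) as [k Hk].
  set (y' := y - IZR k).
  replace (G y - y) with (G y' - y').
  2: { pose proof (shift_Z (fun t => G t - t) 0 (fun t => ltac:(cbv beta; rewrite Hp; ring)) k y') as E.
       unfold y' in E |- *. replace (y - IZR k + IZR k) with y in E by ring. lra. }
  destruct (Req_dec y' 0) as [->|NZ].
  - replace (G 0 - 0 - G 0) with 0 by ring. rewrite Rabs_R0; auto.
  - destruct (MVT_cor2 G D 0 y' ltac:(unfold y' in *; lra) (fun c _ => Hd c)) as [c [Hc _]].
    replace (G y' - y' - G 0) with ((D c - 1) * y') by lra.
    rewrite Rabs_mult, (Rabs_right y') by (unfold y' in *; lra). specialize (HD c).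
    assert (y' < 1) by (unfold y' in *; lra). pose proof (Rabs_pos (D c - 1)). nra.
Qed.

Section DegreeOneInverse.
Variable p : R -> R.
Hypothesis p_inc : forall x y, x < y -> p x < p y.
Hypothesis p_shift : forall x, p (x + 1) = p x + 1.

Lemma degree_one_inverse : continuity p ->
  {q : R -> R | (forall y, p (q y) = y) /\ (forall x, q (p x) = x)}.
Proof.
  intros Hc.
  pose proof (degree_one_near_translate p p_inc p_shift) as Hnear.
  assert (HB : forall y, bound (fun x => p x <= y)).
  { intros y. exists (y - p 0 + 1). intros x Hx. pose proof (Hnear x). lra. }
  assert (HN : forall y, exists x, p x <= y).
  { intros y. exists (y - p 0 - 1). pose proof (Hnear (y - p 0 - 1)). lra. }
  set (q := fun y => proj1_sig (completeness _ (HB y) (HN y))).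
  assert (Hpq : forall y, p (q y) = y).
  { intros y. unfold q. destruct (completeness _ (HB y) (HN y)) as [m [Hub Hlub]]. simpl.
    destruct (Rtotal_order (p m) y) as [Hlt|[Heq|Hgt]]; auto; exfalso.
    - destruct (continuity_pt_eps p m (Hc m) (y - p m) ltac:(lra)) as [d [Hd Hdd]].
      assert (m + d / 2 <= m); [|lra]. apply Hub.
      assert (Rabs (p (m + d / 2) - p m) < y - p m) by (apply Hdd; rewrite Rabs_right; lra).
      apply Rabs_def2 in H. lra.
    - destruct (continuity_pt_eps p m (Hc m) (p m - y) ltac:(lra)) as [d [Hd Hdd]].
      assert (m <= m - d / 2); [|lra]. apply Hlub. intros x Hx.
      apply Rnot_lt_le; intro Hl. assert (x <= m) by (apply Hub; auto).
      assert (Rabs (p x - p m) < p m - y) by (apply Hdd; apply Rabs_def1; lra).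
      apply Rabs_def2 in H0. lra. }
  exists q. split; auto. intros x.
  destruct (Rtotal_order (q (p x)) x) as [Hlt|[Heq|Hgt]]; auto.
  - apply p_inc in Hlt. rewrite Hpq in Hlt. lra.
  - apply p_inc in Hgt. rewrite Hpq in Hgt. lra.
Qed.

Variable q : R -> R.
Hypothesis p_q : forall y, p (q y) = y.
Hypothesis q_p : forall x, q (p x) = x.

Lemma inverse_increasing x y : x < y -> q x < q y.
Proof.
  intros Hxy. destruct (Rlt_or_le (q x) (q y)) as [|[Hl|He]]; auto; exfalso.
  - apply p_inc in Hl. rewrite !p_q in Hl. lra.
  - assert (p (q x) = p (q y)) by (rewrite He; auto). rewrite !p_q in H. lra.
Qed.

Lemma inverse_shift y : q (y + 1) = q y + 1.
Proof. rewrite <- (p_q y) at 1. rewrite <- p_shift, q_p. reflexivity. Qed.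

Lemma inverse_continuous : continuity q.
Proof.
  intros y. apply continuity_pt_of_eps. intros eps He.
  set (x := q y).
  assert (Hy : y = p x) by (unfold x; rewrite p_q; auto).
  assert (p x < p (x + eps)) by (apply p_inc; lra).
  assert (p (x - eps) < p x) by (apply p_inc; lra).
  exists (Rmin (p (x + eps) - y) (y - p (x - eps))). split; [apply Rmin_pos; lra|].
  intros z Hz. apply Rabs_def2 in Hz.
  pose proof (Rmin_l (p (x + eps) - y) (y - p (x - eps))).
  pose proof (Rmin_r (p (x + eps) - y) (y - p (x - eps))).
  assert (q z < q (p (x + eps))) by (apply inverse_increasing; lra).
  assert (q (p (x - eps)) < q z) by (apply inverse_increasing; lra).
  rewrite !q_p in *. apply Rabs_def1; unfold x in *; lra.
Qed.

Lemma derivable_pt_lim_inverse y l :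
  derivable_pt_lim p (q y) l -> 0 < l -> derivable_pt_lim q y (/ l).
Proof.
  intros Hder Hl eps He.
  set (eta := Rmin (l / 2) (eps * l * l / 4)).
  assert (Hell : 0 < eps * l * l) by (apply Rmult_lt_0_compat; [apply Rmult_lt_0_compat|]; lra).
  assert (Heta : 0 < eta) by (apply Rmin_pos; lra).
  destruct (Hder eta Heta) as [[d1 Hd1] Hdd1]. simpl in Hdd1.
  destruct (continuity_pt_eps q y (inverse_continuous y) d1 Hd1) as [d [Hd Hdd]].
  exists (mkposreal d Hd). intros h Hh0 Hh. simpl in Hh.
  set (k := q (y + h) - q y).
  assert (Hk0 : k <> 0).
  { intro E. assert (p (q (y + h)) = p (q y)) by (f_equal; unfold k in E; lra).
    rewrite !p_q in H. lra. }
  assert (Hkd : Rabs k < d1) by (apply Hdd; replace (y + h - y) with h by ring; auto).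
  specialize (Hdd1 k Hk0 Hkd).
  replace (p (q y + k) - p (q y)) with h in Hdd1
    by (unfold k; rewrite Rplus_minus, !p_q; ring).
  set (t := h / k) in *.
  pose proof (Rmin_l (l / 2) (eps * l * l / 4)). pose proof (Rmin_r (l / 2) (eps * l * l / 4)).
  apply Rabs_def2 in Hdd1.
  assert (Htp : l / 2 < t) by (unfold eta in *; lra).
  replace (k / h) with (/ t) by (unfold t; field; split; auto).
  replace (/ t - / l) with ((l - t) / (t * l)) by (field; lra).
  unfold Rdiv. rewrite Rabs_mult, Rabs_inv, (Rabs_right (t * l)) by nra.
  apply Rlt_le_trans with (eps * l * l / 4 / (t * l)).
  - unfold Rdiv at 2. apply Rmult_lt_compat_r; [apply Rinv_0_lt_compat; nra|].
    apply Rabs_def1; unfold eta in *; lra.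
  - apply Rmult_le_reg_r with (t * l); [nra|]. field_simplify; try lra. nra.
Qed.

End DegreeOneInverse.

Module Antiderivative.
Import Coquelicot.Coquelicot.

Lemma antiderivative_exists (e : R -> R) : continuity e ->
  {A : R -> R | (forall x, derivable_pt_lim A x (e x)) /\ A 0 = 0}.
Proof.
  intros He. exists (fun x => RInt e 0 x). split.
  - intros x. apply is_derive_Reals.
    apply (is_derive_RInt e (RInt e 0) 0 x).
    + apply filter_forall. intros b. apply (RInt_correct (V := R_CompleteNormedModule)).
      apply (ex_RInt_continuous (V := R_CompleteNormedModule)).
      intros z _. apply continuity_pt_filterlim, He.
    + apply continuity_pt_filterlim, He.
  - apply (RInt_point (V := R_CompleteNormedModule)).
Qed.
End Antiderivative.

Lemma iter_shift_Z (f : R -> R) : (forall x, f (x + 1) = f x + 1) ->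
  forall n (k : Z) x, Nat.iter n f (x + IZR k) = Nat.iter n f x + IZR k.
Proof.
  intros H n; induction n as [|n IH]; intros k x; simpl; auto.
  rewrite IH, (shift_Z f 1 H). ring.
Qed.

Lemma iter_increasing (f : R -> R) : (forall x y, x < y -> f x < f y) ->
  forall n x y, x < y -> Nat.iter n f x < Nat.iter n f y.
Proof. intros H n; induction n; intros; simpl; auto. Qed.

Lemma iter_nondecreasing (f : R -> R) : (forall x y, x < y -> f x < f y) ->
  forall n x y, x <= y -> Nat.iter n f x <= Nat.iter n f y.
Proof. intros H n x y [Hl| ->]; [left; apply iter_increasing|]; auto; lra. Qed.

Lemma iter_continuous (f : R -> R) : continuity f -> forall n, continuity (Nat.iter n f).
Proof.
  intros H n; induction n as [|n IH]; simpl.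
  - apply derivable_continuous, derivable_id.
  - intros x. apply (continuity_pt_comp (Nat.iter n f) f); auto.
Qed.

Lemma iter_inverse (f finv : R -> R) : (forall x, finv (f x) = x) ->
  forall n x, Nat.iter n finv (Nat.iter n f x) = x.
Proof.
  intros H n; induction n as [|n IH]; intros x; [reflexivity|].
  rewrite Nat.iter_succ_r. simpl. rewrite H. apply IH.
Qed.

Lemma iter_near_translation (G : R -> R) c e : (forall y, Rabs (G y - y - c) <= e) ->
  forall j y, Rabs (Nat.iter j G y - y - INR j * c) <= INR j * e.
Proof.
  intros H j; induction j as [|j IH]; intros y.
  - simpl. replace (y - y - 0 * c) with 0 by ring. rewrite Rabs_R0. lra.
  - rewrite Nat.iter_succ, S_INR. specialize (IH y). specialize (H (Nat.iter j G y)).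
    apply Rabs_le_inv in IH, H. apply Rabs_le. lra.
Qed.

Fixpoint birkhoff_sum (f g : R -> R) (n : nat) (x : R) : R :=
  match n with
  | O => 0
  | S n' => birkhoff_sum f g n' x + g (Nat.iter n' f x)
  end.

Section BirkhoffSums.
Variables f g : R -> R.

Lemma birkhoff_sum_add m k x :
  birkhoff_sum f g (m + k) x = birkhoff_sum f g m x + birkhoff_sum f g k (Nat.iter m f x).
Proof.
  induction k as [|k IH].
  - rewrite Nat.add_0_r; simpl; ring.
  - rewrite Nat.add_succ_r; simpl. rewrite IH, Nat.add_comm, Nat.iter_add. ring.
Qed.

Lemma birkhoff_sum_succ_l n x : birkhoff_sum f g (S n) x = g x + birkhoff_sum f g n (f x).
Proof. change (S n) with (1 + n)%nat. rewrite birkhoff_sum_add. simpl. ring. Qed.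

Lemma birkhoff_sum_shift_Z : (forall x, f (x + 1) = f x + 1) -> periodic g ->
  forall n (k : Z) x, birkhoff_sum f g n (x + IZR k) = birkhoff_sum f g n x.
Proof.
  intros Hf Hg n; induction n as [|n IH]; intros k x; simpl; auto.
  rewrite IH, iter_shift_Z, periodic_Z; auto.
Qed.

Lemma birkhoff_sum_continuous : continuity f -> continuity g ->
  forall n, continuity (birkhoff_sum f g n).
Proof.
  intros Hf Hg n; induction n as [|n IH]; simpl.
  - apply continuity_const. intros x y; auto.
  - apply continuity_plus; auto. intros x.
    apply (continuity_pt_comp (Nat.iter n f) g); auto. apply iter_continuous; auto.
Qed.

Lemma birkhoff_sum_bound C : (forall x, Rabs (g x) <= C) ->
  forall n x, Rabs (birkhoff_sum f g n x) <= INR n * C.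
Proof.
  intros HC n; induction n as [|n IH]; intros x.
  - simpl. rewrite Rabs_R0. lra.
  - cbn [birkhoff_sum]. rewrite S_INR. eapply Rle_trans; [apply Rabs_triang|].
    specialize (IH x). specialize (HC (Nat.iter n f x)). lra.
Qed.

End BirkhoffSums.

Lemma birkhoff_sum_inverse (f finv g : R -> R) : (forall y, f (finv y) = y) ->
  forall n y, birkhoff_sum f g n (Nat.iter n finv y) = - birkhoff_sum finv (fun y => - g (finv y)) n y.
Proof.
  intros Hf n; induction n as [|n IH]; intros y; [simpl; ring|].
  rewrite birkhoff_sum_succ_l, Nat.iter_succ, Hf, IH. cbn [birkhoff_sum]. ring.
Qed.

(** * Counting and the density of irrational rotation orbits *)

Lemma NoDup_map_injective_on (c : nat -> nat) (l : list nat) :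
  NoDup l -> (forall i j, In i l -> In j l -> c i = c j -> i = j) -> NoDup (map c l).
Proof.
  induction l as [|a l IH]; intros Hn Hi; simpl; [constructor|].
  inversion Hn; subst. constructor.
  - intro Hin. apply in_map_iff in Hin. destruct Hin as [z [Hz Hzl]].
    assert (z = a) by (apply Hi; simpl; auto). subst; auto.
  - apply IH; auto. intros; apply Hi; simpl; auto.
Qed.

Lemma filter_seq_length_le_injective (b : nat -> bool) (c : nat -> nat) G N :
  (forall i, b i = true -> (c i < G)%nat) ->
  (forall i j, b i = true -> b j = true -> c i = c j -> i = j) ->
  (length (filter b (seq 0 N)) <= G)%nat.
Proof.
  intros H1 H2. rewrite <- (length_map c), <- (length_seq G 0).
  apply NoDup_incl_length.
  - apply NoDup_map_injective_on; [apply NoDup_filter, seq_NoDup|].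
    intros i j Hi Hj. apply filter_In in Hi, Hj. apply H2; tauto.
  - intros z Hz. apply in_map_iff in Hz. destruct Hz as [i [<- Hi]].
    apply filter_In in Hi. apply in_seq. specialize (H1 i (proj2 Hi)). lia.
Qed.

Lemma filter_seq_length_S (b : nat -> bool) N :
  length (filter b (seq 0 (S N))) = (length (filter b (seq 0 N)) + if b N then 1 else 0)%nat.
Proof. rewrite seq_S, filter_app, length_app. simpl. destruct (b N); simpl; lia. Qed.

Lemma pigeonhole (B : nat -> nat) K : (forall p, (B p < K)%nat) ->
  exists i j, (i < j)%nat /\ B i = B j.
Proof.
  intros HB. apply NNPP; intro Hn.
  assert (Hnd : NoDup (map B (seq 0 (S K)))).
  { apply NoDup_map_injective_on; [apply seq_NoDup|]. intros i j _ _ Hij.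
    destruct (Nat.lt_trichotomy i j) as [Hl|[He|Hg]]; auto; exfalso; apply Hn; eauto. }
  apply (NoDup_incl_length (l' := seq 0 K)) in Hnd.
  - rewrite length_map, !length_seq in Hnd. lia.
  - intros z Hz. apply in_map_iff in Hz. destruct Hz as [i [<- _]]. apply in_seq.
    specialize (HB i). lia.
Qed.

Lemma irrational_mul_inj th : irrational th -> forall (i j : nat) (t : Z),
  INR i * th = INR j * th + IZR t -> i = j.
Proof.
  intros Hirr i j t E. destruct (Nat.eq_dec i j) as [|ne]; auto. exfalso.
  apply (Hirr t (Z.of_nat i - Z.of_nat j)%Z); [lia|].
  rewrite minus_IZR, <- !INR_IZR_INZ.
  assert (INR i <> INR j) by (intro Q; apply INR_eq in Q; auto).
  field_simplify_eq; lra.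
Qed.

Lemma irrational_opp th : irrational th -> irrational (- th).
Proof.
  intros Hirr p q Hq E. apply (Hirr (- p)%Z q Hq). rewrite opp_IZR. unfold Rdiv in *. lra.
Qed.

Lemma multiples_hit_interval del a b : 0 < del < b - a ->
  exists (m : nat) (q : Z), a < INR m * del + IZR q < b.
Proof.
  intros Hdel. set (c := a - IZR (Int_part a)).
  assert (Hc : 0 <= c < 1) by (unfold c; pose proof (base_Int_part a); lra).
  assert (Hc0 : 0 <= c / del) by (apply Rle_mult_inv_pos; lra).
  set (m := Z.to_nat (Int_part (c / del) + 1)).
  assert (Hm : INR m = IZR (Int_part (c / del)) + 1).
  { unfold m. rewrite INR_Z_to_nat, plus_IZR; auto. pose proof (Int_part_nonneg _ Hc0). lia. }
  pose proof (base_Int_part (c / del)).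
  exists m, (Int_part a).
  assert (c < INR m * del <= c + del).
  { rewrite Hm. assert (c = c / del * del) by (field; lra). split; nra. }
  unfold c in *. lra.
Qed.

(* Two of the fractional parts of [0, th, ..., K th] lie in the same box of width [1/K]. *)
Lemma irrational_small_multiple th : irrational th -> forall r, 0 < r ->
  exists (d : nat) (t : Z), 0 < Rabs (INR d * th + IZR t) < r.
Proof.
  intros Hirr r Hr.
  destruct (exists_nat_gt (1 / r)) as [K HK].
  assert (HKr : 1 < INR K * r).
  { apply (Rmult_lt_compat_r r) in HK; [|lra]. unfold Rdiv in HK. rewrite Rmult_assoc, Rinv_l in HK; lra. }
  assert (HK0 : 0 < INR K) by (pose proof (Rdiv_lt_0_compat 1 r Rlt_0_1 Hr); lra).
  set (fr := fun p : nat => INR p * th - IZR (Int_part (INR p * th))).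
  assert (Hfr : forall p, 0 <= fr p < 1) by (intros; unfold fr; pose proof (base_Int_part (INR p * th)); lra).
  assert (HB0 : forall p, (0 <= Int_part (INR K * fr p))%Z).
  { intros p. apply Int_part_nonneg. specialize (Hfr p). nra. }
  destruct (pigeonhole (fun p => Z.to_nat (Int_part (INR K * fr p))) K) as [i [j [Hij HBij]]].
  { intros p. apply INR_lt. rewrite INR_Z_to_nat by auto.
    pose proof (base_Int_part (INR K * fr p)). specialize (Hfr p). nra. }
  apply Z2Nat.inj in HBij; auto.
  pose proof (base_Int_part (INR K * fr i)). pose proof (base_Int_part (INR K * fr j)).
  rewrite HBij in H.
  exists (j - i)%nat, (Int_part (INR i * th) - Int_part (INR j * th))%Z.
  replace (INR (j - i) * th + IZR (Int_part (INR i * th) - Int_part (INR j * th)))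
    with (fr j - fr i) by (unfold fr; rewrite minus_INR, minus_IZR by lia; ring).
  split.
  - apply Rabs_pos_lt. intro E. assert (j = i) by (apply (irrational_mul_inj th Hirr j i
      (Int_part (INR j * th) - Int_part (INR i * th))); unfold fr in E; rewrite minus_IZR; lra). lia.
  - apply Rabs_def1; apply Rmult_lt_reg_l with (INR K); nra.
Qed.

Lemma irrational_orbit_dense th : irrational th -> forall a b, a < b ->
  exists (p : nat) (q : Z), a < INR p * th + IZR q < b.
Proof.
  intros Hirr a b Hab.
  destruct (irrational_small_multiple th Hirr (b - a) ltac:(lra)) as [d [t [Hpos Hsmall]]].
  set (del := INR d * th + IZR t) in *.
  assert (Hmul : forall (m : nat) (s : Z), INR (m * d) * th + IZR (Z.of_nat m * t + s) = INR m * del + IZR s).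
  { intros m s. unfold del. rewrite mult_INR, plus_IZR, mult_IZR, <- INR_IZR_INZ. ring. }
  destruct (Rlt_or_le 0 del) as [Hd|Hd].
  - rewrite Rabs_right in Hsmall by lra.
    destruct (multiples_hit_interval del a b ltac:(lra)) as [m [q Hq]].
    exists (m * d)%nat, (Z.of_nat m * t + q)%Z. rewrite Hmul. exact Hq.
  - rewrite Rabs_left1 in Hpos, Hsmall by lra.
    destruct (multiples_hit_interval (- del) (- b) (- a) ltac:(lra)) as [m [q Hq]].
    exists (m * d)%nat, (Z.of_nat m * t + - q)%Z. rewrite Hmul, opp_IZR. lra.
Qed.

(** * Poincaré's semiconjugacy to the irrational rotation *)

Section Semiconjugacy.
Variables (F : R -> R) (rho : R).
Hypothesis F_cont : continuity F.
Hypothesis F_inc : forall x y, x < y -> F x < F y.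
Hypothesis F_shift : forall x, F (x + 1) = F x + 1.
Hypothesis F_rot : rotation_number F rho.
Hypothesis rho_irr : irrational rho.

Notation Fi n x := (Nat.iter n F x).

Lemma F_le x y : x <= y -> F x <= F y.
Proof. intros [H| ->]; [left; apply F_inc; auto|lra]. Qed.

Lemma rotation_le_of_multiples (d : nat) k z : (1 <= d)%nat ->
  (forall m, Fi (m * d) z - z <= INR m * k) -> INR d * rho <= k.
Proof.
  intros Hd Hm. assert (HD : 1 <= INR d) by (apply (le_INR 1); auto).
  enough (rho <= k / INR d) by (apply (Rmult_le_compat_l (INR d)) in H; [|lra]; field_simplify in H; lra).
  apply (Un_cv_le_along_multiples _ _ _ d Hd (F_rot z)). intros m.
  specialize (Hm (S m)). rewrite mult_INR.
  assert (HS : 1 <= INR (S m)) by (rewrite S_INR; pose proof (pos_INR m); lra).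
  apply Rmult_le_reg_r with (INR (S m) * INR d); [nra|]. field_simplify; nra.
Qed.

Lemma rotation_ge_of_multiples (d : nat) k z : (1 <= d)%nat ->
  (forall m, INR m * k <= Fi (m * d) z - z) -> k <= INR d * rho.
Proof.
  intros Hd Hm. assert (HD : 1 <= INR d) by (apply (le_INR 1); auto).
  enough (k / INR d <= rho) by (apply (Rmult_le_compat_l (INR d)) in H; [|lra]; field_simplify in H; lra).
  apply (Un_cv_ge_along_multiples _ _ _ d Hd (F_rot z)). intros m.
  specialize (Hm (S m)). rewrite mult_INR.
  assert (HS : 1 <= INR (S m)) by (rewrite S_INR; pose proof (pos_INR m); lra).
  apply Rmult_le_reg_r with (INR (S m) * INR d); [nra|]. field_simplify; nra.
Qed.

Lemma iter_mul_le (d : nat) k : (forall z, Fi d z - z <= k) ->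
  forall m z, Fi (m * d) z - z <= INR m * k.
Proof.
  intros H m; induction m as [|m IH]; intros z; [simpl; lra|].
  change (S m * d)%nat with (d + m * d)%nat. rewrite Nat.iter_add, S_INR.
  specialize (H (Fi (m * d) z)). specialize (IH z). lra.
Qed.

Lemma iter_mul_ge (d : nat) k : (forall z, k <= Fi d z - z) ->
  forall m z, INR m * k <= Fi (m * d) z - z.
Proof.
  intros H m; induction m as [|m IH]; intros z; [simpl; lra|].
  change (S m * d)%nat with (d + m * d)%nat. rewrite Nat.iter_add, S_INR.
  specialize (H (Fi (m * d) z)). specialize (IH z). lra.
Qed.

Lemma iter_mul_periodic_point (d : nat) (k : Z) w : Fi d w = w + IZR k ->
  forall m, Fi (m * d) w - w = INR m * IZR k.
Proof.
  intros H m; induction m as [|m IH]; [simpl; lra|].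
  change (S m * d)%nat with (d + m * d)%nat. rewrite Nat.iter_add, S_INR.
  replace (Fi (m * d) w) with (w + IZR (Z.of_nat m * k))
    by (rewrite mult_IZR, <- INR_IZR_INZ; lra).
  rewrite iter_shift_Z, H, mult_IZR, <- INR_IZR_INZ by auto. ring.
Qed.

Lemma displacement_continuous_periodic (d : nat) (k : Z) :
  continuity (fun z => Fi d z - z - IZR k) /\ periodic (fun z => Fi d z - z - IZR k).
Proof.
  split.
  - apply continuity_minus; [apply continuity_minus|apply continuity_const; intros ? ?; auto].
    + apply iter_continuous, F_cont.
    + apply derivable_continuous, derivable_id.
  - intros x. rewrite (iter_shift_Z F F_shift _ 1). ring.
Qed.

Lemma rotation_le_of_displacement (d : nat) (k : Z) z : Fi d z - z <= IZR k -> INR d * rho <= IZR k.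
Proof.
  intros H0. destruct d as [|d']; [simpl in *; rewrite Rmult_0_l; lra|].
  destruct (displacement_continuous_periodic (S d') k) as [Hc Hp].
  destruct (periodic_nonpos_or_root _ z Hc Hp ltac:(cbv beta; lra)) as [Hall|[w Hw]].
  - apply (rotation_le_of_multiples (S d') _ z); [lia|].
    intros m. apply iter_mul_le. intros x. specialize (Hall x). cbv beta in Hall. lra.
  - apply (rotation_le_of_multiples (S d') _ w); [lia|]. intros m.
    rewrite (iter_mul_periodic_point (S d') k w ltac:(lra)). lra.
Qed.

Lemma rotation_ge_of_displacement (d : nat) (k : Z) z : IZR k <= Fi d z - z -> IZR k <= INR d * rho.
Proof.
  intros H0. destruct d as [|d']; [simpl in *; rewrite Rmult_0_l; lra|].
  destruct (displacement_continuous_periodic (S d') k) as [Hc Hp].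
  assert (Hc' : continuity (fun z => - (Fi (S d') z - z - IZR k))) by (apply continuity_opp, Hc).
  assert (Hp' : periodic (fun z => - (Fi (S d') z - z - IZR k))) by (intros x; rewrite Hp; auto).
  destruct (periodic_nonpos_or_root _ z Hc' Hp' ltac:(cbv beta; lra)) as [Hall|[w Hw]].
  - apply (rotation_ge_of_multiples (S d') _ z); [lia|].
    intros m. apply iter_mul_ge. intros x. specialize (Hall x). cbv beta in Hall. lra.
  - apply (rotation_ge_of_multiples (S d') _ w); [lia|]. intros m.
    rewrite (iter_mul_periodic_point (S d') k w ltac:(lra)). lra.
Qed.

Lemma orbit_order (p p' : nat) (q q' : Z) : INR p * rho + IZR q < INR p' * rho + IZR q' ->
  Fi p 0 + IZR q < Fi p' 0 + IZR q'.
Proof.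
  intros H. destruct (le_lt_dec p p') as [Hle|Hlt].
  - replace p' with (p' - p + p)%nat in * by lia.
    rewrite Nat.iter_add. rewrite plus_INR in H. apply Rnot_le_lt. intro Hge.
    assert (INR (p' - p) * rho <= IZR (q - q')); [|rewrite minus_IZR in *; lra].
    apply (rotation_le_of_displacement _ _ (Fi p 0)). rewrite minus_IZR. lra.
  - replace p with (p - p' + p')%nat in * by lia.
    rewrite Nat.iter_add. rewrite plus_INR in H. apply Rnot_le_lt. intro Hge.
    assert (IZR (q' - q) <= INR (p - p') * rho); [|rewrite minus_IZR in *; lra].
    apply (rotation_ge_of_displacement _ _ (Fi p' 0)). rewrite minus_IZR. lra.
Qed.

Lemma orbit_order_rev (p p' : nat) (q q' : Z) : Fi p 0 + IZR q < Fi p' 0 + IZR q' ->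
  INR p * rho + IZR q < INR p' * rho + IZR q'.
Proof.
  intros H. destruct (Rtotal_order (INR p * rho + IZR q) (INR p' * rho + IZR q')) as [|[He|Hg]]; auto.
  - exfalso. assert (p = p') as <-.
    { apply (irrational_mul_inj rho rho_irr p p' (q' - q)). rewrite minus_IZR. lra. }
    assert (IZR q = IZR q') by lra. lra.
  - apply orbit_order in Hg. lra.
Qed.

Lemma iter_succ_shift p (q : Z) : Fi (S p) 0 + IZR q = F (Fi p 0 + IZR q).
Proof. rewrite Nat.iter_succ, (shift_Z F 1 F_shift q). ring. Qed.

Definition below_orbit x v := exists (p : nat) (q : Z), v = INR p * rho + IZR q /\ Fi p 0 + IZR q <= x.

Lemma below_orbit_bound x : bound (below_orbit x).
Proof.
  exists (x + 1). intros v [p [q [-> Hle]]]. apply Rnot_lt_le; intro Hlt.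
  set (k := (Int_part x + 1)%Z).
  assert (Hk : x < IZR k <= x + 1) by (unfold k; rewrite plus_IZR; pose proof (base_Int_part x); simpl; lra).
  assert (H : INR 0 * rho + IZR k < INR p * rho + IZR q) by (simpl; lra).
  apply orbit_order in H. simpl in H. lra.
Qed.

Lemma below_orbit_inhabited x : exists v, below_orbit x v.
Proof.
  exists (IZR (Int_part x)), O, (Int_part x). simpl. split; [ring|].
  pose proof (base_Int_part x). lra.
Qed.

(* [semiconj x] records where [x] sits in the cyclic order of the orbit of [0]. *)
Definition semiconj x := proj1_sig (completeness _ (below_orbit_bound x) (below_orbit_inhabited x)).

Lemma semiconj_lub x : is_lub (below_orbit x) (semiconj x).
Proof. unfold semiconj. destruct (completeness _ _ _). auto. Qed.

Lemma semiconj_ge x v : below_orbit x v -> v <= semiconj x.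
Proof. apply (semiconj_lub x). Qed.

Lemma semiconj_le x B : (forall v, below_orbit x v -> v <= B) -> semiconj x <= B.
Proof. apply (semiconj_lub x). Qed.

Lemma semiconj_nondecreasing x y : x <= y -> semiconj x <= semiconj y.
Proof.
  intros Hxy. apply semiconj_le. intros v [p [q [Ev Hle]]].
  apply semiconj_ge. exists p, q. split; auto. lra.
Qed.

Lemma semiconj_shift x : semiconj (x + 1) = semiconj x + 1.
Proof.
  apply Rle_antisym.
  - enough (semiconj (x + 1) <= semiconj x + 1) by lra. apply semiconj_le. intros v [p [q [Ev Hle]]].
    enough (v - 1 <= semiconj x) by lra. apply semiconj_ge.
    exists p, (q - 1)%Z. rewrite minus_IZR. split; simpl; lra.
  - enough (semiconj x <= semiconj (x + 1) - 1) by lra. apply semiconj_le. intros v [p [q [Ev Hle]]].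
    enough (v + 1 <= semiconj (x + 1)) by lra. apply semiconj_ge.
    exists p, (q + 1)%Z. rewrite plus_IZR. split; simpl; lra.
Qed.

Lemma semiconj_conj x : semiconj (F x) = semiconj x + rho.
Proof.
  apply Rle_antisym.
  - apply semiconj_le. intros v [p [q [Ev Hle]]]. apply Rnot_lt_le; intro Hlt.
    destruct (irrational_orbit_dense rho rho_irr (semiconj x) (v - rho) ltac:(lra)) as [p' [q' Hw]].
    assert (H1 : INR (S p') * rho + IZR q' < INR p * rho + IZR q) by (rewrite S_INR; lra).
    apply orbit_order in H1. rewrite iter_succ_shift in H1.
    assert (Fi p' 0 + IZR q' < x) by (apply Rnot_le_lt; intro Hge; apply F_le in Hge; lra).
    assert (INR p' * rho + IZR q' <= semiconj x) by (apply semiconj_ge; exists p', q'; split; auto; lra).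
    lra.
  - enough (semiconj x <= semiconj (F x) - rho) by lra. apply semiconj_le. intros v [p [q [Ev Hle]]].
    enough (v + rho <= semiconj (F x)) by lra. apply semiconj_ge. exists (S p), q.
    rewrite S_INR, iter_succ_shift. split; [lra|]. apply F_le; auto.
Qed.

(* Continuity: by density, orbit points are found with [semiconj]-values within [eps] on each side. *)
Lemma semiconj_continuous : continuity semiconj.
Proof.
  intro x. apply continuity_pt_of_eps. intros eps He.
  destruct (irrational_orbit_dense rho rho_irr (semiconj x) (semiconj x + eps) ltac:(lra)) as [p [q Hv]].
  assert (Hz : x < Fi p 0 + IZR q).
  { apply Rnot_le_lt; intro Hle.
    assert (INR p * rho + IZR q <= semiconj x) by (apply semiconj_ge; exists p, q; split; auto). lra. }
  assert (Hr : forall y, y < Fi p 0 + IZR q -> semiconj y <= INR p * rho + IZR q).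
  { intros y Hy. apply semiconj_le. intros w [p' [q' [-> Hle]]].
    left. apply orbit_order_rev. lra. }
  destruct (irrational_orbit_dense rho rho_irr (semiconj x - eps) (semiconj x) ltac:(lra)) as [p1 [q1 Hv1]].
  assert (Hex : exists w, below_orbit x w /\ INR p1 * rho + IZR q1 < w).
  { apply NNPP; intro Hn. enough (semiconj x <= INR p1 * rho + IZR q1) by lra.
    apply semiconj_le. intros w Hw. apply Rnot_lt_le; intro. apply Hn; exists w; auto. }
  destruct Hex as [w [[p2 [q2 [-> Hle2]]] Hw]].
  assert (Hz1 : Fi p1 0 + IZR q1 < Fi p2 0 + IZR q2) by (apply orbit_order; lra).
  assert (Hl : forall y, Fi p1 0 + IZR q1 <= y -> INR p1 * rho + IZR q1 <= semiconj y).
  { intros y Hy. apply semiconj_ge. exists p1, q1. split; auto. }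
  set (z := Fi p 0 + IZR q) in *. set (z1 := Fi p1 0 + IZR q1) in *.
  exists (Rmin (z - x) (x - z1)). split; [apply Rmin_pos; lra|].
  intros y Hy. apply Rabs_def2 in Hy.
  pose proof (Rmin_l (z - x) (x - z1)). pose proof (Rmin_r (z - x) (x - z1)).
  specialize (Hr y ltac:(lra)). specialize (Hl y ltac:(lra)). apply Rabs_def1; lra.
Qed.

End Semiconjugacy.

(** * Uniform sublinearity of Birkhoff sums *)

Section Sublinear.
Variables f finv g h : R -> R.
Variable th : R.
Hypothesis f_cont : continuity f.
Hypothesis g_cont : continuity g.
Hypothesis f_inc : forall x y, x < y -> f x < f y.
Hypothesis f_finv : forall y, f (finv y) = y.
Hypothesis f_shift : forall x, f (x + 1) = f x + 1.
Hypothesis g_per : periodic g.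
Hypothesis f_mvt : forall u v, u < v -> exists c, u <= c <= v /\ f v - f u <= (v - u) * exp (g c).
Hypothesis h_cont : continuity h.
Hypothesis h_mono : forall x y, x <= y -> h x <= h y.
Hypothesis h_shift : forall x, h (x + 1) = h x + 1.
Hypothesis h_conj : forall x, h (f x) = h x + th.
Hypothesis th_irr : irrational th.

Notation Bsum := (birkhoff_sum f g).

Lemma h_iter n x : h (Nat.iter n f x) = h x + INR n * th.
Proof. induction n as [|n IH]; [simpl; ring|]. rewrite Nat.iter_succ, h_conj, IH, S_INR. ring. Qed.

Lemma h_shift_Z (k : Z) x : h (x + IZR k) = h x + IZR k.
Proof. rewrite (shift_Z h 1 h_shift). ring. Qed.

Definition left_end a := forall s, 0 < s -> h (a - s) < h a.

Lemma left_end_f a : left_end a -> left_end (f a).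
Proof.
  intros H s Hs. set (a' := finv (f a - s)).
  assert (Ha : f a' = f a - s) by apply f_finv.
  assert (a' < a).
  { destruct (Rlt_or_le a' a) as [|[Hl|He]]; auto.
    - apply f_inc in Hl; lra.
    - rewrite He in Ha; lra. }
  rewrite <- Ha, !h_conj. specialize (H (a - a') ltac:(lra)).
  replace (a - (a - a')) with a' in H by ring. lra.
Qed.

Lemma left_end_iter n a : left_end a -> left_end (Nat.iter n f a).
Proof. induction n; simpl; auto. intros; apply left_end_f; auto. Qed.

Lemma left_end_shift a k : left_end a -> left_end (a + IZR k).
Proof.
  intros H s Hs. replace (a + IZR k - s) with ((a - s) + IZR k) by ring.
  rewrite !h_shift_Z. specialize (H s Hs). lra.
Qed.

Lemma exists_left_end x : exists a, a <= x /\ h a = h x /\ left_end a.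
Proof.
  set (E := fun w => h (- w) = h x).
  assert (Hb : bound E).
  { exists (1 - x). intros w Hw. unfold E in Hw.
    apply Rnot_lt_le. intro Hl.
    assert (h (- w) <= h (x + IZR (-1))) by (apply h_mono; simpl; lra).
    rewrite h_shift_Z in H. simpl in H. lra. }
  assert (Hne : exists w, E w) by (exists (- x); unfold E; rewrite Ropp_involutive; auto).
  destruct (completeness E Hb Hne) as [m [Hub Hlub]].
  assert (Hmx : - x <= m) by (apply Hub; unfold E; rewrite Ropp_involutive; auto).
  assert (Hval : h (- m) = h x).
  { apply Rle_antisym; [apply h_mono; lra|].
    apply Rnot_lt_le; intro Hlt.
    destruct (continuity_pt_eps h (- m) (h_cont (- m)) (h x - h (- m)) ltac:(lra)) as [d [Hd Hdd]].
    assert (Hex : exists w, E w /\ m - d < w).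
    { apply NNPP; intro Hn. enough (m <= m - d) by lra.
      apply Hlub. intros w Hw. apply Rnot_lt_le; intro; apply Hn; exists w; auto. }
    destruct Hex as [w [Hw Hwd]]. assert (w <= m) by (apply Hub; auto).
    destruct (Req_dec w m) as [->|ne]; [unfold E in Hw; lra|].
    assert (Hh : Rabs (h (- w) - h (- m)) < h x - h (- m)) by (apply Hdd; rewrite Rabs_right; lra).
    unfold E in Hw. rewrite Hw, Rabs_right in Hh; lra. }
  exists (- m). repeat split; [lra|auto|].
  intros s Hs. destruct (h_mono (- m - s) (- m) ltac:(lra)) as [|Heq]; auto. exfalso.
  enough (m + s <= m) by lra. apply Hub. unfold E.
  replace (- (m + s)) with (- m - s) by ring. rewrite Heq; auto.
Qed.

(* The gaps [f^i a, f^i x] are collapsed by [h] to the points [h x + i th]; a gap wider than [1/G]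
   contains a point of [Z/G], and by irrationality distinct gaps get distinct points of [Z/G] mod 1. *)
Lemma few_wide_gaps d (G : nat) x a N :
  (0 < G)%nat -> 1 < INR G * d -> a <= x -> h a = h x ->
  (length (filter (fun i => if Rlt_dec d (Nat.iter i f x - Nat.iter i f a) then true else false)
                  (seq 0 N)) <= G)%nat.
Proof.
  intros HG HGd Hax Hh.
  set (u i := Nat.iter i f a). set (v i := Nat.iter i f x).
  assert (Hlev : forall i z, u i <= z <= v i -> h z = h x + INR i * th).
  { intros i z [H1 H2]. apply h_mono in H1, H2.
    unfold u, v in *. rewrite !h_iter in *. rewrite Hh in H1. lra. }
  set (k i := (Int_part (INR G * u i) + 1)%Z).
  set (P i := IZR (k i) / INR G).
  assert (HGp : 0 < INR G) by (apply lt_0_INR; auto).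
  assert (HGz : (0 < Z.of_nat G)%Z) by lia.
  apply filter_seq_length_le_injective with (fun i => Z.to_nat (k i mod Z.of_nat G)).
  - intros i _. pose proof (Z.mod_pos_bound (k i) _ HGz). lia.
  - assert (HP : forall i, d < v i - u i -> h (P i) = h x + INR i * th).
    { intros i Hd. apply Hlev. pose proof (base_Int_part (INR G * u i)).
      unfold P, k. rewrite plus_IZR.
      split; apply Rmult_le_reg_l with (INR G); auto; field_simplify; nra. }
    intros i j Hi Hj Hc. fold (u i) (v i) in Hi. fold (u j) (v j) in Hj.
    destruct (Rlt_dec d (v i - u i)) as [Hdi|]; [|discriminate].
    destruct (Rlt_dec d (v j - u j)) as [Hdj|]; [|discriminate].
    pose proof (Z.mod_pos_bound (k i) _ HGz). pose proof (Z.mod_pos_bound (k j) _ HGz).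
    apply Z2Nat.inj in Hc; try lia.
    pose proof (Z.div_mod (k i) (Z.of_nat G) ltac:(lia)). pose proof (Z.div_mod (k j) (Z.of_nat G) ltac:(lia)).
    set (t := (k i / Z.of_nat G - k j / Z.of_nat G)%Z).
    assert (Ek : IZR (k i) = IZR (k j) + INR G * IZR t).
    { rewrite INR_IZR_INZ, <- mult_IZR, <- plus_IZR. f_equal. unfold t. lia. }
    assert (EP : P i = P j + IZR t) by (unfold P; rewrite Ek; field; lra).
    pose proof (HP i Hdi) as Hi'. pose proof (HP j Hdj) as Hj'.
    rewrite EP, h_shift_Z in Hi'.
    apply (irrational_mul_inj th th_irr i j t). lra.
Qed.

(* Points of one level set of [h] have Birkhoff sums differing by [o(N)]: narrow gaps cost
   at most [w] each, and there are at most [G] wide ones. *)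
Lemma level_set_distortion C d w (G : nat) x a :
  (forall x, Rabs (g x) <= C) -> (forall u v, Rabs (u - v) <= d -> Rabs (g u - g v) <= w) ->
  (0 < G)%nat -> 1 < INR G * d -> a <= x -> h a = h x ->
  forall N, Rabs (Bsum N x - Bsum N a) <= INR N * w + 2 * C * INR G.
Proof.
  intros HC Hw HG HGd Hax Hh N.
  set (wide i := if Rlt_dec d (Nat.iter i f x - Nat.iter i f a) then true else false).
  assert (Hw0 : 0 <= w).
  { assert (0 < d) by (pose proof (pos_INR G); nra).
    specialize (Hw 0 0). rewrite !Rminus_diag, Rabs_R0 in Hw. specialize (Hw ltac:(lra)).
    pose proof (Rabs_pos (g 0 - g 0)). lra. }
  assert (HC0 : 0 <= C) by (pose proof (HC 0); pose proof (Rabs_pos (g 0)); lra).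
  assert (Hind : forall N, Rabs (Bsum N x - Bsum N a) <= INR N * w + 2 * C * INR (length (filter wide (seq 0 N)))).
  { intros M; induction M as [|M IH].
    - simpl. rewrite Rminus_0_r, Rabs_R0. lra.
    - cbn [birkhoff_sum]. rewrite filter_seq_length_S, plus_INR, S_INR.
      set (u := Nat.iter M f a) in *. set (v := Nat.iter M f x) in *.
      replace (Bsum M x + g v - (Bsum M a + g u)) with ((Bsum M x - Bsum M a) + (g v - g u)) by ring.
      eapply Rle_trans; [apply Rabs_triang|].
      assert (Huv : u <= v) by (apply iter_nondecreasing; auto).
      unfold wide at 2. fold u v. destruct (Rlt_dec d (v - u)) as [Hl|Hn]; simpl.
      + assert (Rabs (g v - g u) <= 2 * C).
        { eapply Rle_trans; [apply Rabs_triang|]. rewrite Rabs_Ropp.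
          pose proof (HC v). pose proof (HC u). lra. }
        lra.
      + assert (Rabs (g v - g u) <= w) by (apply Hw; rewrite Rabs_right; lra). lra. }
  eapply Rle_trans; [apply Hind|].
  apply Rplus_le_compat_l, Rmult_le_compat_l; [lra|apply le_INR, few_wide_gaps; auto].
Qed.

Lemma deep_descent_at_left_end eps K : 0 < eps ->
  (forall N, exists n x, (N <= n)%nat /\ Bsum n x < - (INR n * eps)) ->
  exists n a, K <= INR n * eps /\ left_end a /\ Bsum n a < - (INR n * eps / 2).
Proof.
  intros He Hbad.
  destruct (periodic_bounded g g_cont g_per) as [C [HC1 HC]].
  destruct (shift_uniform_continuity g 0 (periodic_shift g g_per) g_cont (eps / 4) ltac:(lra))
    as [d [Hd Hud]].
  destruct (exists_nat_gt (2 / d)) as [G HG].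
  assert (HGd : 1 < INR G * (d / 2)).
  { apply (Rmult_lt_compat_r (d / 2)) in HG; [|lra].
    replace (2 / d * (d / 2)) with 1 in HG by (field; lra). lra. }
  assert (HG0 : (0 < G)%nat) by (destruct G; [simpl in HGd; lra|lia]).
  destruct (exists_nat_gt ((Rabs K + 8 * C * INR G) / eps)) as [N0 HN0].
  destruct (Hbad N0) as [n [x [Hn0 Hx]]].
  destruct (exists_left_end x) as [a [Hax [Hha HLa]]].
  pose proof (level_set_distortion C (d / 2) (eps / 4) G x a HC
    (fun u v Huv => Rlt_le _ _ (Hud u v ltac:(lra))) HG0 HGd Hax Hha n) as Hdist.
  apply le_INR in Hn0.
  assert (Hne : Rabs K + 8 * C * INR G < INR n * eps).
  { apply (Rmult_lt_compat_r eps) in HN0; [|lra].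
    replace ((Rabs K + 8 * C * INR G) / eps * eps) with (Rabs K + 8 * C * INR G) in HN0
      by (field; lra). nra. }
  pose proof (pos_INR G). pose proof (Rle_abs K). pose proof (Rabs_pos K).
  assert (0 <= 8 * C * INR G) by nra.
  exists n, a. split; [lra|split; [exact HLa|]]. apply Rabs_le_inv in Hdist. nra.
Qed.

(* Cutting the orbit of a deep descent where [Bsum k a + k eps/4] is maximal yields segments,
   starting at left ends, along which every partial sum stays below [- j eps/4]. *)
Lemma long_descending_segments eps : 0 < eps ->
  (forall N, exists n x, (N <= n)%nat /\ Bsum n x < - (INR n * eps)) ->
  forall M : nat, exists y, 0 <= y <= 1 /\ left_end y /\
    forall j, (j <= M)%nat -> Bsum j y <= - (INR j * (eps / 4)).
Proof.
  intros He Hbad M.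
  destruct (periodic_bounded g g_cont g_per) as [C [HC1 HC]].
  destruct (deep_descent_at_left_end eps (4 * C * INR M + eps) He Hbad) as [n [a [Hn [HLa Hsa]]]].
  set (lam := eps / 4).
  destruct (exists_argmax_upto (fun k => Bsum k a + INR k * lam) n) as [m [Hmn Hmax]].
  set (y0 := Nat.iter m f a).
  assert (Hy0 : forall j, (m + j <= n)%nat -> Bsum j y0 <= - (INR j * lam)).
  { intros j Hj. specialize (Hmax (m + j)%nat Hj). simpl in Hmax.
    rewrite birkhoff_sum_add, plus_INR in Hmax. unfold y0. lra. }
  assert (Hm0 : - (INR m * lam) <= Bsum m a) by (specialize (Hmax O ltac:(lia)); simpl in Hmax; lra).
  assert (Hsplit : Bsum n a = Bsum m a + Bsum (n - m) y0).
  { unfold y0. rewrite <- birkhoff_sum_add. f_equal. lia. }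
  pose proof (birkhoff_sum_bound f g C HC (n - m) y0) as Hb. apply Rabs_le_inv in Hb.
  rewrite minus_INR in Hb by auto.
  assert (HmM : (M < n - m)%nat).
  { apply INR_lt. rewrite minus_INR by auto.
    assert (INR m <= INR n) by (apply le_INR; auto). pose proof (pos_INR M).
    apply Rmult_lt_reg_l with C; [lra|]. unfold lam in *. nra. }
  exists (y0 + IZR (- Int_part y0)). split; [|split].
  - pose proof (base_Int_part y0). rewrite opp_IZR. lra.
  - apply left_end_shift, left_end_iter; auto.
  - intros j Hj. rewrite birkhoff_sum_shift_Z by auto. apply Hy0. lia.
Qed.

Lemma exists_contracting_point lam : 0 < lam ->
  (forall M : nat, exists y, 0 <= y <= 1 /\ left_end y /\
    forall j, (j <= M)%nat -> Bsum j y <= - (INR j * lam)) ->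
  exists l, (forall j, Bsum j l <= - (INR j * lam)) /\ (forall r, 0 < r -> h (l - r) < h (l + r)).
Proof.
  intros Hlam Hgood.
  destruct (choice _ Hgood) as [y Hy].
  destruct (Bolzano_Weierstrass y (fun t => 0 <= t <= 1) (compact_P3 0 1) (fun M => proj1 (Hy M)))
    as [l Hl].
  exists l. split.
  - intro j. apply Rnot_lt_le; intro Hlt.
    destruct (continuity_pt_eps (Bsum j) l (birkhoff_sum_continuous f g f_cont g_cont j l)
                (Bsum j l + INR j * lam) ltac:(lra)) as [d [Hd Hdd]].
    destruct (Hl (fun z => Rabs (z - l) < d) j) as [p [Hp Hv]].
    { exists (mkposreal d Hd). intros z Hz. exact Hz. }
    destruct (Hy p) as [_ [_ Hj]]. specialize (Hj j Hp). specialize (Hdd _ Hv).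
    apply Rabs_def2 in Hdd. lra.
  - intros r Hr.
    destruct (Hl (fun z => Rabs (z - l) < r / 2) O) as [p [_ Hv]].
    { exists (mkposreal (r / 2) ltac:(lra)). intros z Hz. exact Hz. }
    destruct (Hy p) as [_ [HL _]]. specialize (HL (r / 2) ltac:(lra)).
    apply Rabs_def2 in Hv.
    pose proof (h_mono (l - r) (y p - r / 2) ltac:(lra)).
    pose proof (h_mono (y p) (l + r) ltac:(lra)). lra.
Qed.

Lemma interval_contraction lam l r : 0 < lam -> 0 < r ->
  (forall u v, Rabs (u - v) <= 2 * r -> g u <= g v + lam / 2) ->
  (forall j, Bsum j l <= - (INR j * lam)) ->
  forall j, Nat.iter j f (l + r) - Nat.iter j f (l - r) <= 2 * r * exp (Bsum j l + INR j * (lam / 2)).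
Proof.
  intros Hlam Hr Hg Hl j; induction j as [|j IH].
  - simpl. rewrite Rmult_0_l, Rplus_0_r, exp_0. lra.
  - set (u := Nat.iter j f (l - r)) in *. set (v := Nat.iter j f (l + r)) in *.
    set (c := Nat.iter j f l).
    assert (Hneg : Bsum j l + INR j * (lam / 2) <= 0) by (specialize (Hl j); pose proof (pos_INR j); nra).
    assert (Hex : exp (Bsum j l + INR j * (lam / 2)) <= 1) by (rewrite <- exp_0; apply exp_le_exp; auto).
    assert (Huv : u < v) by (apply iter_increasing; auto; lra).
    assert (Hucv : u <= c <= v) by (split; apply iter_nondecreasing; auto; lra).
    destruct (f_mvt _ _ Huv) as [z [Hz Hle]].
    assert (Hgz : g z <= g c + lam / 2) by (apply Hg, Rabs_le; nra).
    rewrite !Nat.iter_succ. fold u v. cbn [birkhoff_sum]. rewrite S_INR. fold c.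
    eapply Rle_trans; [apply Hle|].
    replace (Bsum j l + g c + (INR j + 1) * (lam / 2))
      with ((Bsum j l + INR j * (lam / 2)) + (g c + lam / 2)) by ring.
    rewrite exp_plus, <- Rmult_assoc.
    apply Rmult_le_compat; [lra|left; apply exp_pos|exact IH|apply exp_le_exp; auto].
Qed.

(* [h] maps [f^j [l - r, l + r]] onto an arc of the fixed length [h (l + r) - h (l - r)],
   so these intervals cannot shrink to points. *)
Lemma no_contracting_point lam l : 0 < lam ->
  (forall j, Bsum j l <= - (INR j * lam)) -> (forall r, 0 < r -> h (l - r) < h (l + r)) -> False.
Proof.
  intros Hlam Hl Hmass.
  destruct (shift_uniform_continuity g 0 (periodic_shift g g_per) g_cont (lam / 2) ltac:(lra))
    as [d2 [Hd2 Hu2]].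
  set (r := d2 / 4). assert (Hr : 0 < r) by (unfold r; lra).
  assert (Hg : forall u v, Rabs (u - v) <= 2 * r -> g u <= g v + lam / 2).
  { intros u v Huv. assert (Rabs (u - v) < d2) by (unfold r in Huv; lra).
    specialize (Hu2 u v H). apply Rabs_def2 in Hu2. lra. }
  pose proof (interval_contraction lam l r Hlam Hr Hg Hl) as Hcon.
  set (m0 := h (l + r) - h (l - r)).
  assert (Hm0 : 0 < m0) by (unfold m0; pose proof (Hmass r Hr); lra).
  destruct (shift_uniform_continuity h 1 h_shift h_cont m0 Hm0) as [d3 [Hd3 Hu3]].
  destruct (exists_nat_gt (4 * r / (lam * d3))) as [j Hj].
  assert (Hjl : 2 * r < d3 * (INR j * (lam / 2))).
  { apply (Rmult_lt_compat_r (d3 * (lam / 2))) in Hj; [|nra].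
    replace (4 * r / (lam * d3) * (d3 * (lam / 2))) with (2 * r) in Hj by (field; lra). lra. }
  assert (Hjpos : INR j * (lam / 2) <> 0) by nra.
  pose proof (exp_ineq1 _ Hjpos) as Hexp.
  assert (HDj : Nat.iter j f (l + r) - Nat.iter j f (l - r) < d3).
  { eapply Rle_lt_trans; [apply Hcon|].
    assert (exp (Bsum j l + INR j * (lam / 2)) <= exp (- (INR j * (lam / 2))))
      by (apply exp_le_exp; specialize (Hl j); lra).
    rewrite exp_Ropp in H. pose proof (exp_pos (INR j * (lam / 2))).
    assert (2 * r * / exp (INR j * (lam / 2)) < d3).
    { apply Rmult_lt_reg_r with (exp (INR j * (lam / 2))); auto.
      rewrite Rmult_assoc, Rinv_l by lra. nra. }
    nra. }
  assert (Hpos : Nat.iter j f (l - r) < Nat.iter j f (l + r)) by (apply iter_increasing; auto; lra).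
  specialize (Hu3 (Nat.iter j f (l + r)) (Nat.iter j f (l - r))).
  rewrite !h_iter, Rabs_right in Hu3 by lra.
  replace (h (l + r) + INR j * th - (h (l - r) + INR j * th)) with m0 in Hu3 by (unfold m0; ring).
  rewrite Rabs_right in Hu3; lra.
Qed.

Theorem birkhoff_sum_lower eps : 0 < eps ->
  exists N, forall n, (N <= n)%nat -> forall x, - (INR n * eps) <= Bsum n x.
Proof.
  intros He. apply NNPP; intro Hn.
  assert (Hbad : forall N, exists n x, (N <= n)%nat /\ Bsum n x < - (INR n * eps)).
  { intro N. apply NNPP; intro H. apply Hn. exists N. intros n Hnn x.
    apply Rnot_lt_le. intro Hl. apply H. exists n, x. auto. }
  destruct (exists_contracting_point (eps / 4) ltac:(lra) (long_descending_segments eps He Hbad))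
    as [l [Hl Hmass]].
  exact (no_contracting_point (eps / 4) l ltac:(lra) Hl Hmass).
Qed.
End Sublinear.

Section Diffeo.
Variables (F F' : R -> R) (rho : R).
Hypothesis F_deriv : forall x, derivable_pt_lim F x (F' x).
Hypothesis F'_cont : continuity F'.
Hypothesis F'_pos : forall x, 0 < F' x.
Hypothesis F_shift : forall x, F (x + 1) = F x + 1.
Hypothesis F_rot : rotation_number F rho.
Hypothesis rho_irr : irrational rho.

Lemma F_continuous : continuity F.
Proof. intro x. apply derivable_continuous_pt. exact (exist _ (F' x) (F_deriv x)). Qed.

Lemma F_increasing : forall x y, x < y -> F x < F y.
Proof. exact (increasing_of_deriv_pos F F' F_deriv F'_pos). Qed.

Lemma F'_periodic : periodic F'.
Proof.
  intros x. apply (uniqueness_limite (fun y => F (y + 1)) x).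
  - replace (F' (x + 1)) with (F' (x + 1) * 1) by ring.
    apply (derivable_pt_lim_comp (fun y => y + 1) F), F_deriv. apply derivable_pt_lim_shift1.
  - intros eps He. destruct (F_deriv x eps He) as [d Hd]. exists d. intros k Hk1 Hk2.
    rewrite !F_shift. replace (F (x + k) + 1 - (F x + 1)) with (F (x + k) - F x) by ring. auto.
Qed.

Definition log_deriv x := ln (F' x).

Lemma log_deriv_continuous : continuity log_deriv.
Proof.
  intro x. apply (continuity_pt_comp F' ln); [apply F'_cont|].
  apply derivable_continuous_pt. exact (exist _ _ (derivable_pt_lim_ln _ (F'_pos x))).
Qed.

Lemma log_deriv_periodic : periodic log_deriv.
Proof. intros x. unfold log_deriv. rewrite F'_periodic. auto. Qed.

Lemma F_mvt u v : u < v -> exists c, u <= c <= v /\ F v - F u <= (v - u) * exp (log_deriv c).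
Proof.
  intros Huv. destruct (MVT_cor2 F F' u v Huv (fun c _ => F_deriv c)) as [c [Hc Hcuv]].
  exists c. split; [lra|]. unfold log_deriv. rewrite exp_ln, Hc by auto. lra.
Qed.

Definition Finv := proj1_sig (degree_one_inverse F F_increasing F_shift F_continuous).

Lemma F_Finv y : F (Finv y) = y.
Proof. unfold Finv. destruct (degree_one_inverse _ _ _ _) as [q [H1 H2]]. apply H1. Qed.

Lemma Finv_F x : Finv (F x) = x.
Proof. unfold Finv. destruct (degree_one_inverse _ _ _ _) as [q [H1 H2]]. apply H2. Qed.

Lemma Finv_increasing x y : x < y -> Finv x < Finv y.
Proof. exact (inverse_increasing F F_increasing Finv F_Finv x y). Qed.

Lemma Finv_shift y : Finv (y + 1) = Finv y + 1.
Proof. exact (inverse_shift F F_shift Finv F_Finv Finv_F y). Qed.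

Lemma Finv_continuous : continuity Finv.
Proof. exact (inverse_continuous F F_increasing Finv F_Finv Finv_F). Qed.

Definition log_deriv_inv y := - log_deriv (Finv y).

Lemma log_deriv_inv_continuous : continuity log_deriv_inv.
Proof.
  intro y. apply continuity_pt_opp, (continuity_pt_comp Finv log_deriv).
  - apply Finv_continuous.
  - apply log_deriv_continuous.
Qed.

Lemma log_deriv_inv_periodic : periodic log_deriv_inv.
Proof. intros y. unfold log_deriv_inv. rewrite Finv_shift, log_deriv_periodic. auto. Qed.

Lemma Finv_mvt u v : u < v -> exists c, u <= c <= v /\ Finv v - Finv u <= (v - u) * exp (log_deriv_inv c).
Proof.
  intros Huv. pose proof (Finv_increasing u v Huv) as Hl.
  destruct (MVT_cor2 F F' (Finv u) (Finv v) Hl (fun c _ => F_deriv c)) as [c [Hc Hcuv]].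
  rewrite !F_Finv in Hc. exists (F c). split.
  - rewrite <- (F_Finv u), <- (F_Finv v). split; left; apply F_increasing; lra.
  - unfold log_deriv_inv, log_deriv. rewrite Finv_F, exp_Ropp, exp_ln, Hc by auto.
    pose proof (F'_pos c). right. field. lra.
Qed.

Notation h := (semiconj F rho F_continuous F_shift F_rot).

Lemma semiconj_Finv y : h (Finv y) = h y + - rho.
Proof.
  pose proof (semiconj_conj F rho F_continuous F_increasing F_shift F_rot rho_irr (Finv y)) as E.
  rewrite F_Finv in E. lra.
Qed.

(* Applying the lower bound to [F] and to [F^-1] bounds the sums from both sides. *)
Theorem birkhoff_sum_sublinear eps : 0 < eps -> exists N, forall n, (N <= n)%nat -> forall x,
  Rabs (birkhoff_sum F log_deriv n x) <= INR n * eps.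
Proof.
  intros He.
  pose proof (semiconj_continuous F rho F_continuous F_shift F_rot rho_irr) as h_cont.
  pose proof (semiconj_nondecreasing F rho F_continuous F_shift F_rot) as h_mono.
  pose proof (semiconj_shift F rho F_continuous F_shift F_rot) as h_shift.
  destruct (birkhoff_sum_lower F Finv log_deriv h rho F_continuous log_deriv_continuous
              F_increasing F_Finv F_shift log_deriv_periodic F_mvt h_cont h_mono h_shift
              (semiconj_conj F rho F_continuous F_increasing F_shift F_rot rho_irr) rho_irr eps He)
    as [N1 H1].
  destruct (birkhoff_sum_lower Finv F log_deriv_inv h (- rho) Finv_continuous
              log_deriv_inv_continuous Finv_increasing Finv_F Finv_shift log_deriv_inv_periodic
              Finv_mvt h_cont h_mono h_shift semiconj_Finv (irrational_opp rho rho_irr) eps He)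
    as [N2 H2].
  exists (Nat.max N1 N2). intros n Hn x.
  specialize (H1 n ltac:(lia) x). specialize (H2 n ltac:(lia) (Nat.iter n F x)).
  pose proof (birkhoff_sum_inverse F Finv log_deriv F_Finv n (Nat.iter n F x)) as E.
  rewrite iter_inverse in E by apply Finv_F.
  apply Rabs_le. unfold log_deriv_inv in H2. lra.
Qed.

(** * The conjugating maps *)

Notation Bsum := (birkhoff_sum F log_deriv).

Fixpoint sum_birkhoff (m : nat) (x : R) : R :=
  match m with O => 0 | S m' => sum_birkhoff m' x + Bsum m' x end.

(* The cohomological identity behind the construction: [phi_m o F + ln F' - phi_m = Bsum m / m]
   for [phi_m = sum_birkhoff m / m]. *)
Lemma sum_birkhoff_F m x : sum_birkhoff m (F x) + INR m * log_deriv x = sum_birkhoff m x + Bsum m x.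
Proof.
  induction m as [|m IH]; [simpl; ring|].
  cbn [sum_birkhoff]. rewrite S_INR. pose proof (birkhoff_sum_succ_l F log_deriv m x). lra.
Qed.

Lemma sum_birkhoff_continuous m : continuity (sum_birkhoff m).
Proof.
  induction m as [|m IH]; cbn [sum_birkhoff].
  - apply continuity_const. intros ? ?; auto.
  - apply continuity_plus; auto.
    apply birkhoff_sum_continuous; [apply F_continuous|apply log_deriv_continuous].
Qed.

Lemma sum_birkhoff_periodic m : periodic (sum_birkhoff m).
Proof.
  intros x. induction m as [|m IH]; cbn [sum_birkhoff]; auto.
  rewrite IH, (birkhoff_sum_shift_Z F log_deriv F_shift log_deriv_periodic m 1 x). auto.
Qed.

Definition conj_density m x := exp (sum_birkhoff m x / INR m).

Lemma conj_density_continuous m : continuity (conj_density m).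
Proof.
  intro x. apply (continuity_pt_comp (fun x => sum_birkhoff m x / INR m) exp).
  - apply continuity_pt_mult; [apply sum_birkhoff_continuous|apply continuity_pt_const; intros ? ?; auto].
  - apply derivable_continuous_pt, derivable_exp.
Qed.

Lemma conj_density_periodic m : periodic (conj_density m).
Proof. intros x. unfold conj_density. rewrite sum_birkhoff_periodic. auto. Qed.

Definition conj_primitive m := proj1_sig (Antiderivative.antiderivative_exists _ (conj_density_continuous m)).

Lemma conj_primitive_deriv m x : derivable_pt_lim (conj_primitive m) x (conj_density m x).
Proof. unfold conj_primitive. destruct (Antiderivative.antiderivative_exists _ _) as [A [H1 H2]]. apply H1. Qed.

Lemma conj_primitive_0 m : conj_primitive m 0 = 0.
Proof. unfold conj_primitive. destruct (Antiderivative.antiderivative_exists _ _) as [A [H1 H2]]. apply H2. Qed.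

Lemma conj_primitive_shift m x : conj_primitive m (x + 1) = conj_primitive m x + conj_primitive m 1.
Proof.
  set (D := fun y => conj_primitive m (y + 1) - conj_primitive m y).
  assert (HD : forall y, derivable_pt_lim D y 0).
  { intros y. replace 0 with (conj_density m (y + 1) * 1 - conj_density m y)
      by (rewrite conj_density_periodic; ring).
    apply derivable_pt_lim_minus; [|apply conj_primitive_deriv].
    apply (derivable_pt_lim_comp (fun y => y + 1) (conj_primitive m));
      [apply derivable_pt_lim_shift1|apply conj_primitive_deriv]. }
  pose proof (constant_of_deriv_zero D HD x) as E. unfold D in E.
  rewrite Rplus_0_l, conj_primitive_0 in E. lra.
Qed.

Lemma conj_primitive_1_pos m : 0 < conj_primitive m 1.
Proof.
  rewrite <- (conj_primitive_0 m). apply (increasing_of_deriv_pos _ (conj_density m));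
    [apply conj_primitive_deriv|intros; apply exp_pos|lra].
Qed.

Definition conj_map m x := / conj_primitive m 1 * conj_primitive m x.

Definition conj_map_deriv m x := / conj_primitive m 1 * conj_density m x.

Lemma conj_map_derivable m x : derivable_pt_lim (conj_map m) x (conj_map_deriv m x).
Proof. apply (derivable_pt_lim_scal (conj_primitive m)), conj_primitive_deriv. Qed.

Lemma conj_map_deriv_pos m x : 0 < conj_map_deriv m x.
Proof.
  apply Rmult_lt_0_compat; [apply Rinv_0_lt_compat, conj_primitive_1_pos|apply exp_pos].
Qed.

Lemma conj_map_increasing m : forall x y, x < y -> conj_map m x < conj_map m y.
Proof. apply (increasing_of_deriv_pos _ _ (conj_map_derivable m) (conj_map_deriv_pos m)). Qed.

Lemma conj_map_shift m x : conj_map m (x + 1) = conj_map m x + 1.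
Proof.
  unfold conj_map. rewrite conj_primitive_shift. pose proof (conj_primitive_1_pos m). field. lra.
Qed.

Lemma conj_map_continuous m : continuity (conj_map m).
Proof. intro x. apply derivable_continuous_pt. exact (exist _ _ (conj_map_derivable m x)). Qed.

Lemma conj_map_diffeo m : circle_diffeo (conj_map m).
Proof.
  exists (conj_map_deriv m). repeat split.
  - apply conj_map_derivable.
  - apply (continuity_scal (conj_density m)), conj_density_continuous.
  - apply conj_map_deriv_pos.
  - apply conj_map_shift.
Qed.

Lemma conj_map_near_id m u : Rabs (conj_map m u - u) < 1.
Proof.
  pose proof (degree_one_near_translate _ (conj_map_increasing m) (conj_map_shift m) u) as H.
  replace (conj_map m 0) with 0 in H by (unfold conj_map; rewrite conj_primitive_0; ring).
  apply Rabs_def1; lra.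
Qed.

Definition conj_map_inv m :=
  proj1_sig (degree_one_inverse _ (conj_map_increasing m) (conj_map_shift m) (conj_map_continuous m)).

Lemma conj_map_inv_spec m : (forall y, conj_map m (conj_map_inv m y) = y) /\ (forall x, conj_map_inv m (conj_map m x) = x).
Proof. unfold conj_map_inv. destruct (degree_one_inverse _ _ _ _) as [q H]. exact H. Qed.

Definition conjugate m y := conj_map m (F (conj_map_inv m y)).

Definition conjugate_deriv m y :=
  conj_map_deriv m (F (conj_map_inv m y)) * (F' (conj_map_inv m y) * / conj_map_deriv m (conj_map_inv m y)).

Lemma conjugate_derivable m y : derivable_pt_lim (conjugate m) y (conjugate_deriv m y).
Proof.
  destruct (conj_map_inv_spec m) as [Hl Hr].
  apply (derivable_pt_lim_comp (comp F (conj_map_inv m)) (conj_map m)); [|apply conj_map_derivable].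
  apply derivable_pt_lim_comp; [|apply F_deriv].
  apply (derivable_pt_lim_inverse _ (conj_map_increasing m) _ Hl Hr);
    [apply conj_map_derivable | apply conj_map_deriv_pos].
Qed.

Lemma conjugate_deriv_eq m y : (1 <= m)%nat ->
  conjugate_deriv m y = exp (Bsum m (conj_map_inv m y) / INR m).
Proof.
  intros Hm. set (z := conj_map_inv m y). unfold conjugate_deriv, conj_map_deriv, conj_density. fold z.
  pose proof (conj_primitive_1_pos m). pose proof (F'_pos z).
  assert (HmR : 1 <= INR m) by (apply (le_INR 1); auto).
  replace (Bsum m z / INR m) with (sum_birkhoff m (F z) / INR m + log_deriv z - sum_birkhoff m z / INR m)
    by (pose proof (sum_birkhoff_F m z); field_simplify_eq; lra).
  unfold log_deriv. unfold Rminus. rewrite !exp_plus, exp_Ropp, exp_ln by auto.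
  field. split; [pose proof (exp_pos (sum_birkhoff m z / INR m))|]; lra.
Qed.

Lemma conjugate_shift m y : conjugate m (y + 1) = conjugate m y + 1.
Proof.
  unfold conjugate, conj_map_inv. destruct (degree_one_inverse _ _ _ _) as [q [Hl Hr]]. simpl.
  rewrite (inverse_shift _ (conj_map_shift m) q Hl Hr), F_shift, conj_map_shift. auto.
Qed.

Lemma conjugate_iter m j y : Nat.iter j (conjugate m) y = conj_map m (Nat.iter j F (conj_map_inv m y)).
Proof.
  destruct (conj_map_inv_spec m) as [Hl Hr].
  induction j as [|j IH]; [simpl; rewrite Hl; auto|].
  rewrite !Nat.iter_succ, IH. unfold conjugate. rewrite Hr. auto.
Qed.

Lemma conjugate_deriv_near_one eps : 0 < eps -> exists N, forall n, (N <= n)%nat ->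
  forall y, Rabs (conjugate_deriv (S n) y - 1) <= eps.
Proof.
  intros He.
  destruct (continuity_pt_eps exp 0 (derivable_continuous_pt _ _ (derivable_exp 0)) eps He)
    as [d [Hd Hdd]].
  destruct (birkhoff_sum_sublinear (d / 2) ltac:(lra)) as [N HN].
  exists N. intros n Hn y. set (m := S n).
  assert (HmR : 1 <= INR m) by (apply (le_INR 1); unfold m; lia).
  rewrite conjugate_deriv_eq by (unfold m; lia). rewrite <- exp_0. left. apply Hdd.
  specialize (HN m ltac:(unfold m; lia) (conj_map_inv m y)).
  rewrite Rminus_0_r. unfold Rdiv. rewrite Rabs_mult, Rabs_inv, (Rabs_right (INR m)) by lra.
  apply Rmult_le_compat_r with (r := / INR m) in HN; [|left; apply Rinv_0_lt_compat; lra].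
  replace (INR m * (d / 2) * / INR m) with (d / 2) in HN by (field; lra). lra.
Qed.

(* The translation amount is pinned down by the rotation number, which conjugation by
   [conj_map] (a bounded perturbation of the identity) preserves. *)
Lemma conjugate_near_rotation m e : (forall y, Rabs (conjugate_deriv m y - 1) <= e) ->
  forall y, Rabs (conjugate m y - (y + rho)) <= 2 * e.
Proof.
  intros HD y.
  pose proof (degree_one_near_translation _ _ e (conjugate_shift m) (conjugate_derivable m) HD) as Hnt.
  set (c := conjugate m 0) in *.
  assert (Hrc : Rabs (rho - c) <= e).
  { set (w := conj_map_inv m 0).
    apply (Un_cv_near_linear (fun j => Nat.iter j F w - w) rho c e (F_rot w)).
    intro j. pose proof (iter_near_translation _ c e Hnt j 0) as H1.
    rewrite conjugate_iter in H1. fold w in H1.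
    pose proof (conj_map_near_id m (Nat.iter j F w)) as H2. pose proof (conj_map_near_id m w) as H3.
    replace (conj_map m w) with 0 in H3 by (symmetry; apply conj_map_inv_spec).
    apply Rabs_le_inv in H1. apply Rabs_def2 in H2, H3. apply Rabs_le. lra. }
  specialize (Hnt y). apply Rabs_le_inv in Hnt, Hrc. apply Rabs_le. lra.
Qed.

End Diffeo.

Theorem mainTheorem3 (F : R -> R) (rho : R)
  (hF : circle_diffeo F) (hrho : rotation_number F rho) (hirr : irrational rho) :
  exists (H Hinv : nat -> R -> R) (G' : nat -> R -> R),
    (forall n, circle_diffeo (H n)) /\
    (forall n x, H n (Hinv n x) = x /\ Hinv n (H n x) = x) /\
    (forall n x, derivable_pt_lim (fun y => H n (F (Hinv n y))) x (G' n x)) /\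
    (forall eps, 0 < eps -> exists N : nat, forall n, (N <= n)%nat ->
       exists k : Z, forall x,
         Rabs (H n (F (Hinv n x)) - (x + rho) - IZR k) <= eps /\
         Rabs (G' n x - 1) <= eps).
Proof.
  destruct hF as [F' [HFd [HF'c [HF'p HFp]]]].
  exists (fun n => conj_map F F' HFd HF'c HF'p (S n)),
         (fun n => conj_map_inv F F' HFd HF'c HF'p HFp (S n)),
         (fun n => conjugate_deriv F F' HFd HF'c HF'p HFp (S n)).
  split; [|split; [|split]].
  - intros n. exact (conj_map_diffeo F F' HFd HF'c HF'p HFp (S n)).
  - intros n x. destruct (conj_map_inv_spec F F' HFd HF'c HF'p HFp (S n)). auto.
  - intros n. exact (conjugate_derivable F F' HFd HF'c HF'p HFp (S n)).
  - intros eps He.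
    destruct (conjugate_deriv_near_one F F' rho HFd HF'c HF'p HFp hrho hirr (eps / 2) ltac:(lra))
      as [N HN].
    exists N. intros n Hn. exists 0%Z. intros x. split.
    + pose proof (conjugate_near_rotation F F' rho HFd HF'c HF'p HFp hrho (S n) (eps / 2) (HN n Hn) x).
      rewrite Rminus_0_r. unfold conjugate in H. lra.
    + pose proof (HN n Hn x). lra.
Qed.
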